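(* Let $G$ be a supergraceful graph with $p$ nodes and $q$ edges having a total labeling $\varphi$ with $1 \in N(\varphi)$. Then for each integer $t \ge 0$ there exists a supergraceful graph with $p+t$ nodes and $q+t$ edges.
   Context: Graphs are finite, simple. For a labeling $\varphi: V(G) \to \mathbb{Z}_{>0}$ let $N(\varphi) = \{\varphi(x) : x \in V(G)\}$ and $E(\varphi) = \{|\varphi(x)-\varphi(y)| : xy \in E(G)\}$. A total labeling of a graph with $p$ nodes and $q$ edges is a map $\varphi$ such that the $p$ node labels and the $q$ edge labels are pairwise distinct and $N(\varphi) \cup E(\varphi) = \{1,\dots,p+q\}$; a graph is supergraceful if it admits a total labeling. *)

From mathcomp Require Import all_boot all_order all_algebra.
Set Implicit Arguments. Unset Strict Implicit. Unset Printing Implicit Defensive.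

Definition simple_graph (T : finType) (e : rel T) : Prop :=
  symmetric e /\ irreflexive e.

Definition edges (T : finType) (e : rel T) : {set {set T}} :=
  [set [set xy.1; xy.2] | xy in [set xy : T * T | e xy.1 xy.2]].

Definition ldist (a b : nat) : nat := `|(a%:Z - b%:Z)%R|%N.

Definition total_labeling (T : finType) (e : rel T) (phi : T -> nat) : Prop :=
  [/\ (forall x, 0 < phi x),
      injective phi,
      (forall x y u v, e x y -> e u v ->
         ldist (phi x) (phi y) = ldist (phi u) (phi v) ->
         [set x; y] = [set u; v]),
      (forall x u v, e u v -> phi x <> ldist (phi u) (phi v)) &
      (* N(phi) u E(phi) = {1, ..., p + q} *)
      (forall k, (1 <= k <= #|T| + #|edges e|) <->
         ((exists x, phi x = k) \/
          (exists u v, e u v /\ ldist (phi u) (phi v) = k)))].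

Definition supergraceful (T : finType) (e : rel T) : Prop :=
  exists phi : T -> nat, total_labeling e phi.

From mathcomp Require Import all_boot all_order all_algebra zify.

Set Implicit Arguments.
Unset Strict Implicit.
Unset Printing Implicit Defensive.

(* Let n = p + q and let x0 carry the label 1.  Attaching a pendant vertex to
   x0 and labelling it n + 2 gives the new edge the label n + 1, so the labels
   now cover exactly {1, ..., n + 2} = {1, ..., (p + 1) + (q + 1)}, and 1 is
   still a node label.  Repeating this t times yields the required graph. *)

Definition supergraceful_with_label1 (T : finType) (e : rel T) : Prop :=
  exists2 phi : T -> nat, total_labeling e phi & exists x, phi x = 1.

Lemma imset_set2 (aT rT : finType) (f : aT -> rT) (a b : aT) :
  f @: [set a; b] = [set f a; f b].
Proof. by rewrite imsetU1 imset_set1. Qed.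

Lemma inj_set2 (aT rT : finType) (f : aT -> rT) (a b c d : aT) :
  injective f -> [set f a; f b] = [set f c; f d] -> [set a; b] = [set c; d].
Proof. by move=> f_inj; rewrite -!imset_set2 => /(imset_inj f_inj). Qed.

Lemma edgesP (T : finType) (e : rel T) (S : {set T}) :
  reflect (exists x y, e x y /\ S = [set x; y]) (S \in edges e).
Proof.
apply: (iffP imsetP) => [[[x y]] /[!inE] exy ->|[x [y [exy ->]]]].
  by exists x, y.
by exists (x, y) => //; rewrite inE.
Qed.

Lemma card_eq_bij (U V : finType) :
  #|V| = #|U| -> exists f : V -> U, bijective f.
Proof.
move=> eqVU; exists (fun v => enum_val (cast_ord eqVU (enum_rank v))).
exists (fun u => enum_val (cast_ord (esym eqVU) (enum_rank u))) => [v|u].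
  by rewrite enum_valK cast_ordK enum_rankK.
by rewrite enum_valK cast_ordKV enum_rankK.
Qed.

Section TotalLabelingRange.
Variables (T : finType) (e : rel T) (phi : T -> nat).
Hypothesis phi_tl : total_labeling e phi.

Lemma total_labeling_node_range x : 0 < phi x <= #|T| + #|edges e|.
Proof. by case: phi_tl => _ _ _ _ range; apply/range; left; exists x. Qed.

Lemma total_labeling_edge_range x y :
  e x y -> 0 < ldist (phi x) (phi y) <= #|T| + #|edges e|.
Proof. by case: phi_tl => _ _ _ _ range exy; apply/range; right; exists x, y. Qed.

End TotalLabelingRange.

Section Relabel.
Variables (U V : finType) (r : rel U) (f : V -> U).

Lemma simple_graph_relpre : simple_graph r -> simple_graph (relpre f r).
Proof. by case=> r_sym r_irr; split=> [a b|a]; [apply: r_sym | apply: r_irr]. Qed.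

Hypothesis f_bij : bijective f.

Lemma card_edges_relpre : #|edges (relpre f r)| = #|edges r|.
Proof.
have [g _ gK] := f_bij.
have -> : edges r = [set f @: S | S : {set V} in edges (relpre f r)].
  apply/setP => S; apply/edgesP/imsetP => [[x [y [rxy ->]]]|].
    exists [set g x; g y]; last by rewrite imset_set2 !gK.
    by apply/edgesP; exists (g x), (g y); rewrite /= !gK.
  by case=> S' /edgesP [a [b [rab ->]]] ->; exists (f a), (f b); rewrite imset_set2.
by rewrite [RHS]card_imset //; apply: imset_inj; apply: bij_inj.
Qed.

Lemma total_labeling_relpre phi :
  total_labeling r phi -> total_labeling (relpre f r) (phi \o f).
Proof.
have [g _ gK] := f_bij; have f_inj := bij_inj f_bij.
case=> pos inj edge_inj node_edge range; split.
- by move=> a; apply: pos.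
- exact: inj_comp inj f_inj.
- by move=> a b c d rab rcd /(edge_inj _ _ _ _ rab rcd) /inj_set2; apply.
- by move=> a b c; apply: node_edge.
- move=> k; rewrite (bij_eq_card f_bij) card_edges_relpre range.
  split=> [[[x <-]|[x [y [rxy <-]]]]|[[a <-]|[a [b [rab <-]]]]].
  + by left; exists (g x); rewrite /= gK.
  + by right; exists (g x), (g y); rewrite /= !gK.
  + by left; exists (f a).
  + by right; exists (f a), (f b).
Qed.

End Relabel.

Lemma supergraceful_with_label1_transport (U V : finType) (r : rel U) :
  #|V| = #|U| -> simple_graph r -> supergraceful_with_label1 r ->
  exists r' : rel V,
    [/\ simple_graph r', #|edges r'| = #|edges r| & supergraceful_with_label1 r'].
Proof.
move=> /card_eq_bij [f f_bij] r_sg [phi phi_tl [x phi_x]].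
have [g _ gK] := f_bij.
exists (relpre f r); split.
- exact: simple_graph_relpre.
- exact: card_edges_relpre.
- exists (phi \o f); first exact: total_labeling_relpre.
  by exists (g x); rewrite /= gK.
Qed.

Section Pendant.
Variables (T : finType) (e : rel T) (x0 : T).

Definition add_pendant : rel (option T) := fun a b =>
  match a, b with
  | Some x, Some y => e x y
  | Some x, None => x == x0
  | None, Some y => y == x0
  | None, None => false
  end.

Variant add_pendant_spec : option T -> option T -> Prop :=
  | AddPendantOld x y of e x y : add_pendant_spec (Some x) (Some y)
  | AddPendantNewL : add_pendant_spec (Some x0) None
  | AddPendantNewR : add_pendant_spec None (Some x0).

Lemma add_pendantP a b : add_pendant a b -> add_pendant_spec a b.
Proof. by case: a b => [x|] [y|] //= => [|/eqP->|/eqP->]; constructor. Qed.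

Lemma simple_graph_add_pendant : simple_graph e -> simple_graph add_pendant.
Proof. by case=> e_sym e_irr; split=> [[x|] [y|]|[x|]] //=. Qed.

Lemma edges_add_pendant :
  edges add_pendant = [set Some x0; None] |: [set Some @: S | S : {set T} in edges e].
Proof.
apply/setP => S; rewrite !inE; apply/edgesP/orP.
  case=> a [b [/add_pendantP [x y exy||] ->]]; [right | by left | by left; rewrite setUC].
  by apply/imsetP; exists [set x; y]; [apply/edgesP; exists x, y | rewrite imset_set2].
case=> [/eqP->|/imsetP [S' /edgesP [x [y [exy ->]]] ->]].
  by exists (Some x0), None; rewrite /= eqxx.
by exists (Some x), (Some y); rewrite imset_set2.
Qed.

Lemma card_edges_add_pendant : #|edges add_pendant| = #|edges e|.+1.
Proof.
rewrite edges_add_pendant cardsU1 [X in _ + X]card_imset; last exact: (imset_inj Some_inj).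
suff /negbTE-> : [set Some x0; None] \notin [set Some @: S | S : {set T} in edges e] by [].
apply/imsetP => -[S _ /setP /(_ None)]; rewrite !inE eqxx orbT.
by move/esym/imsetP => [].
Qed.

Variable phi : T -> nat.
Hypotheses (phi_tl : total_labeling e phi) (phi_x0 : phi x0 = 1).

Let n := #|T| + #|edges e|.

Definition pendant_labeling (a : option T) : nat :=
  if a is Some x then phi x else n.+2.

Let node_le x : 0 < phi x <= n := total_labeling_node_range phi_tl x.
Let edge_le x y : e x y -> 0 < ldist (phi x) (phi y) <= n :=
  @total_labeling_edge_range _ _ _ phi_tl x y.
Let new_edge : ldist (phi x0) n.+2 = n.+1 /\ ldist n.+2 (phi x0) = n.+1.
Proof. by rewrite phi_x0 /ldist; split; lia. Qed.

Lemma total_labeling_add_pendant : total_labeling add_pendant pendant_labeling.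
Proof.
have [_ inj edge_inj node_edge range] := phi_tl.
have [new_l new_r] := new_edge.
split.
- by case=> [x|] //=; have := node_le x; lia.
- case=> [x|] [y|] //= => [/inj->//||]; [have := node_le x | have := node_le y]; lia.
- move=> a b c d /add_pendantP[x y exy||] /add_pendantP[u v euv||] /=;
    rewrite ?new_l ?new_r ?[[set None; _]]setUC //;
    try by [have := edge_le exy; lia | have := edge_le euv; lia].
  by move/(edge_inj _ _ _ _ exy euv); rewrite -!(imset_set2 Some) => ->.
- move=> [x|] u v /add_pendantP[y z eyz||] /=; rewrite ?new_l ?new_r;
    try by [exact: node_edge | lia | have := node_le x; lia | have := edge_le eyz; lia].
- move=> k; rewrite card_option card_edges_add_pendant addSnnS !addnS -/n.
  split=> [/andP [k_gt0 k_le]|].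
    have [k_le_n|k_gt_n] := leqP k n.
      have /range [[x <-]|[x [y [exy <-]]]] : 0 < k <= n by rewrite k_gt0.
        by left; exists (Some x).
      by right; exists (Some x), (Some y).
    have [->|->] : k = n.+1 \/ k = n.+2 by lia.
      by right; exists (Some x0), None; rewrite /= eqxx new_l.
    by left; exists None.
  case=> [[[x|] <-]|[a [b [/add_pendantP [x y exy||] <-]]]] /=;
    rewrite ?new_l ?new_r; [have := node_le x | | have := edge_le exy | |]; lia.
Qed.

Lemma supergraceful_with_label1_add_pendant :
  supergraceful_with_label1 add_pendant.
Proof.
by exists pendant_labeling; [exact: total_labeling_add_pendant | exists (Some x0)].
Qed.

End Pendant.

Lemma pendant_extensions (T : finType) (e : rel T) :
  simple_graph e -> supergraceful_with_label1 e ->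
  forall t, exists e' : rel 'I_(#|T| + t),
    [/\ simple_graph e', #|edges e'| = #|edges e| + t & supergraceful_with_label1 e'].
Proof.
move=> e_sg e_sg1; elim=> [|t [e' [e'_sg e'_card [phi phi_tl [x phi_x]]]]].
  have card_base : #|'I_(#|T| + 0)| = #|T| by rewrite card_ord addn0.
  have [e0 [e0_sg e0_card e0_sg1]] :=
    supergraceful_with_label1_transport card_base e_sg e_sg1.
  by exists e0; rewrite e0_card [RHS]addn0.
have card_step : #|'I_(#|T| + t.+1)| = #|{: option 'I_(#|T| + t)}|.
  by rewrite card_option !card_ord addnS.
have [e'' [e''_sg e''_card e''_sg1]] := supergraceful_with_label1_transport card_step
  (simple_graph_add_pendant x e'_sg) (supergraceful_with_label1_add_pendant phi_tl phi_x).
by exists e''; rewrite e''_card card_edges_add_pendant e'_card [RHS]addnS.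
Qed.

Theorem theorem8p5 (T : finType) (e : rel T) (phi : T -> nat) :
  simple_graph e ->
  total_labeling e phi ->
  (exists x, phi x = 1) ->
  forall t : nat,
    exists e' : rel 'I_(#|T| + t),
      [/\ simple_graph e', #|edges e'| = #|edges e| + t & supergraceful e'].
Proof.
move=> e_sg phi_tl phi_1 t.
have [e' [e'_sg e'_card [psi psi_tl _]]] :=
  pendant_extensions e_sg (ex_intro2 _ _ phi phi_tl phi_1) t.
by exists e'; split=> //; exists psi.
Qed.
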